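(* Let $r\ge 1$, $n$ be integers and let $\sigma,\sigma':\mathbb{Z}_n\to\{0,1\}$ be configurations with $\mathrm{maj}_r(\sigma)=\sigma'$. If $i\in\mathbb{Z}_n$ satisfies $\sigma'(i)\ne\sigma'(i+1)$, then $\sigma(i-r)=\sigma'(i)$ and $\sigma(i+1+r)=\sigma'(i+1)$.
   Context: Cells are elements of $\mathbb{Z}_n$, arithmetic mod $n$. For a configuration $\sigma$ and $\beta\in\{0,1\}$, $\#_\beta(\sigma[I])$ counts cells $\ell$ in the cyclic interval $I$ with $\sigma(\ell)=\beta$. The majority rule with radius $r$: $\mathrm{maj}_r(\sigma)(i)=0$ if $\#_0(\sigma[[i-r,i+r]])>\#_1(\sigma[[i-r,i+r]])$ and $=1$ otherwise, where $[i-r,i+r]$ is the cyclic interval $i-r,\dots,i+r$. *)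

From mathcomp Require Import all_boot all_order all_algebra.
From mathcomp Require Import zify.
Set Implicit Arguments. Unset Strict Implicit. Unset Printing Implicit Defensive.
Import Order.TTheory GRing.Theory Num.Theory.

(* Cells of Z_n are represented by 'I_n (n > 0 is forced by the existence of a
   cell); arithmetic is mod n. *)

Lemma cshift_proof (n : nat) (i : 'I_n) (k : int) :
  (`|((i%:Z + k) %% n%:Z)%Z| < n)%N.
Proof.
have n0 : (0 < n)%N by apply: leq_ltn_trans (ltn_ord i).
have h0 : (0 <= ((i%:Z + k) %% n%:Z)%Z)%R by apply: modz_ge0; rewrite eqz_nat -lt0n.
have h1 : (((i%:Z + k) %% n%:Z)%Z < n%:Z)%R by apply: ltz_pmod; rewrite ltz_nat.
by rewrite -ltz_nat gez0_abs.
Qed.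

Definition cshift (n : nat) (i : 'I_n) (k : int) : 'I_n :=
  Ordinal (cshift_proof i k).

Definition wcount (n r : nat) (sigma : 'I_n -> bool) (i : 'I_n) (beta : bool) : nat :=
  \sum_(k < (2 * r).+1) (sigma (cshift i (k%:Z - r%:Z)%R) == beta).

Definition maj (n r : nat) (sigma : 'I_n -> bool) : 'I_n -> bool :=
  fun i => if (wcount r sigma i false > wcount r sigma i true)%N then false else true.

(* Sliding the window from [i] to [i+1] drops the cell [i-r] and adds the cell
   [i+1+r], so the number of ones changes by [sigma(i+1+r) - sigma(i-r)].  The
   majority at [i] and [i+1] can only differ if that count crosses the
   threshold [r], which forces the dropped cell to carry the old majority and
   the added cell the new one. *)

From mathcomp Require Import all_boot all_order all_algebra.
From mathcomp Require Import zify.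
Import GRing.Theory Num.Theory.

Set Implicit Arguments.

Lemma cshiftD (n : nat) (i : 'I_n) (a b : int) :
  cshift (cshift i a) b = cshift i (a + b)%R.
Proof.
have n_gt0 : (0 < n)%N by apply: leq_ltn_trans (ltn_ord i).
apply/val_inj => /=; congr absz.
rewrite abszE ger0_norm; last by apply: modz_ge0; rewrite eqz_nat -lt0n.
by rewrite modzDml addrA.
Qed.

Lemma wcount_false_true (n r : nat) (sigma : 'I_n -> bool) (i : 'I_n) :
  (wcount r sigma i false + wcount r sigma i true)%N = (2 * r).+1.
Proof.
rewrite -big_split /= -[RHS]card_ord -sum1_card.
by apply: eq_bigr => k _; case: (sigma _).
Qed.

Lemma majE (n r : nat) (sigma : 'I_n -> bool) (i : 'I_n) :
  maj r sigma i = (r < wcount r sigma i true)%N.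
Proof.
have total := wcount_false_true r sigma i.
by rewrite /maj; case: ltnP => h; apply/esym; [apply/negbTE|]; lia.
Qed.

Lemma wcount_cshift1 (n r : nat) (sigma : 'I_n -> bool) (i : 'I_n) :
  (wcount r sigma (cshift i 1%:Z) true + sigma (cshift i (- r%:Z)%R)
   = wcount r sigma i true + sigma (cshift i (1%:Z + r%:Z)%R))%N.
Proof.
pose g (k : nat) : nat := sigma (cshift i (k%:Z - r%:Z)%R).
have gE (k : nat) (a : int) : a = (k%:Z - r%:Z)%R -> sigma (cshift i a) = g k :> nat.
  by move=> ->.
have shifted : wcount r sigma (cshift i 1%:Z) true = \sum_(k < (2 * r).+1) g k.+1.
  by apply: eq_bigr => k _; rewrite cshiftD eqb_id (gE k.+1) //; lia.
have unshifted : wcount r sigma i true = \sum_(k < (2 * r).+1) g k.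
  by apply: eq_bigr => k _; rewrite eqb_id.
have dropped : sigma (cshift i (- r%:Z)%R) = g 0 :> nat by apply: gE; lia.
have added : sigma (cshift i (1%:Z + r%:Z)%R) = g (2 * r).+1 :> nat.
  by apply: gE; lia.
rewrite shifted unshifted dropped added.
transitivity (\sum_(k < (2 * r).+2) g k); last by rewrite [LHS]big_ord_recr.
by rewrite [RHS]big_ord_recl addnC.
Qed.

Lemma threshold_crossing (r a b : nat) (x y : bool) :
  (b + x = a + y)%N -> (r < a)%N != (r < b)%N ->
  x = (r < a)%N /\ y = (r < b)%N.
Proof. by case: x; case: y; case: ltnP; case: ltnP => //= *; lia. Qed.

Theorem claim1 (r n : nat) (hr : (1 <= r)%N) (sigma sigma' : 'I_n -> bool)
  (hmaj : maj r sigma = sigma') (i : 'I_n)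
  (hi : sigma' i != sigma' (cshift i 1%:Z)) :
  sigma (cshift i (- (r%:Z))%R) = sigma' i /\
  sigma (cshift i (1%:Z + r%:Z)%R) = sigma' (cshift i 1%:Z).
Proof.
rewrite -hmaj !majE in hi *.
exact: threshold_crossing (wcount_cshift1 r sigma i) hi.
Qed.
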